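(* Let $k\ge 2$ and let $\alpha_1,\dots,\alpha_k$ be nonnegative rational numbers such that the sum of any $k-1$ of them is at most $1$ and $\alpha_1+\cdots+\alpha_k>1$. For every integer $g\ge 0$, the number $f(g)$ of $\alpha$-communal $k$-tuples whose entries sum to $g$ equals \[ f(g)=\binom{\sum_{i=1}^k \lfloor \alpha_i g\rfloor - g + k-1}{k-1}, \] where, as usual, $\binom{n}{r}=0$ for integers $0\le n<r$.
   Context: A $k$-tuple $[g_1,\dots,g_k]$ of integers is called $\alpha$-communal (for $\alpha=(\alpha_1,\dots,\alpha_k)$) if $0\le g_i\le \alpha_i\sum_{j=1}^k g_j$ for every $i$. For an integer $g\ge 0$, $f(g)$ denotes the number of $\alpha$-communal $k$-tuples $[g_1,\dots,g_k]$ with $\sum_i g_i=g$. *)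

From HB Require Import structures.
From mathcomp Require Import all_boot all_order all_algebra.
Set Implicit Arguments. Unset Strict Implicit. Unset Printing Implicit Defensive.
Import Order.TTheory GRing.Theory Num.Theory.

Definition communal (k : nat) (alpha : 'I_k -> rat) (t : 'I_k -> nat) : bool :=
  [forall i, ((t i)%:R <= alpha i * (\sum_(j < k) t j)%:R)%R].

(* f(g): the number of alpha-communal k-tuples with entry sum g.
   Entries are bounded by g, so tuples are enumerated as finite functions
   'I_k -> 'I_(g.+1). *)
Definition f_count (k : nat) (alpha : 'I_k -> rat) (g : nat) : nat :=
  #|[set t : {ffun 'I_k -> 'I_g.+1} |
      ((\sum_(i < k) (t i : nat)) == g) && communal alpha (fun i => t i)]|.

From HB Require Import structures.
From mathcomp Require Import all_boot all_order all_algebra zify.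
Import Order.TTheory GRing.Theory Num.Theory.
Set Implicit Arguments. Unset Strict Implicit.

(* Write k = m + 1 and a_i = floor (alpha_i * g).  For integer entries the
   communal condition g_i <= alpha_i * g is just g_i <= a_i, so f(g) counts
   the compositions of g into k parts bounded above by a = (a_i).  The
   hypotheses on alpha give, after multiplying by g and rounding down,
     (1) sum_(j != i) a_j <= g for every i, and
     (2) g < sum_i a_i + k.
   Condition (1) says that each upper bound is "inactive" as soon as the
   complementary parts sum to g.  Hence, with A = sum_i a_i and g <= A, the
   complement t |-> (a_i - t_i)_i is a bijection from the bounded
   compositions of g onto all compositions of A - g into k parts, of which
   there are 'C(A - g + m, m) (stars and bars, [card_ord_partitions]); when
   A < g both sides vanish.  Condition (2) makes the integer N of the
   statement equal to A + m - g >= 0, which gives the theorem. *)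

Lemma card_in_bij (T T' : finType) (A : {set T}) (B : {set T'})
    (f : T -> T') (h : T' -> T) :
  {in A, forall x, f x \in B} -> {in B, forall y, h y \in A} ->
  {in A, cancel f h} -> {in B, cancel h f} -> #|A| = #|B|.
Proof.
move=> fB hA fK hK; rewrite -(card_in_imset (can_in_inj fK)).
congr #|pred_of_set _|; apply/setP => y.
apply/imsetP/idP => [[x xA ->] | yB]; first exact: fB.
by exists (h y); rewrite ?hA ?hK.
Qed.

Section BoundedCompositions.

Variables (m g : nat) (a : 'I_m.+1 -> nat).

Definition bounded_compositions : {set {ffun 'I_m.+1 -> 'I_g.+1}} :=
  [set t : {ffun 'I_m.+1 -> 'I_g.+1} |
     (\sum_(i < m.+1) (t i : nat) == g) && [forall i, t i <= a i]].

Let A := \sum_(i < m.+1) a i.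

Lemma sum_bounds_split i : A = a i + \sum_(j | j != i) a j.
Proof. by rewrite /A (bigD1 i). Qed.

(* Removing a bounded composition of g from the bounds leaves A - g,
   so each complementary part is at most A - g. *)
Lemma complement_le t i :
  t \in bounded_compositions -> a i - t i <= A - g.
Proof.
rewrite inE => /andP[/eqP tg /forallP tle].
have split_t : \sum_(j < m.+1) (t j : nat) = t i + \sum_(j | j != i) (t j : nat).
  by rewrite (bigD1 i).
have : \sum_(j | j != i) (t j : nat) <= \sum_(j | j != i) a j.
  by apply: leq_sum => j _; exact: tle.
by move: split_t (tle i) (sum_bounds_split i); rewrite tg; lia.
Qed.

Lemma complement_sum t :
  t \in bounded_compositions -> \sum_(i < m.+1) (a i - t i) = A - g.
Proof.
by rewrite inE => /andP[/eqP tg /forallP tle]; rewrite sumnB // tg.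
Qed.

Hypothesis cosum_le : forall i, \sum_(j | j != i) a j <= g.
Hypothesis g_le_A : g <= A.

(* Conversely, by [cosum_le] every part of a composition of A - g lies
   below the corresponding bound, and complementing yields a composition of g. *)
Lemma composition_le_bound (u : m.+1.-tuple 'I_(A - g).+1) i : tnth u i <= a i.
Proof.
have := cosum_le i; have := sum_bounds_split i; have := ltn_ord (tnth u i).
lia.
Qed.

Lemma complement_tuple_sum (u : m.+1.-tuple 'I_(A - g).+1) :
  \sum_(i <- u) (i : nat) = A - g -> \sum_(i < m.+1) (a i - tnth u i) = g.
Proof.
move=> usum; rewrite sumnB => [|i _]; last exact: composition_le_bound.
have -> : \sum_(i < m.+1) (tnth u i : nat) = A - g.
  by apply: etrans usum; rewrite big_tuple.
by rewrite subKn.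
Qed.

Lemma card_bounded_compositions_complement :
  #|bounded_compositions| =
  #|[set u : m.+1.-tuple 'I_(A - g).+1 | \sum_(i <- u) (i : nat) == A - g]|.
Proof.
pose phi (t : {ffun 'I_m.+1 -> 'I_g.+1}) : m.+1.-tuple 'I_(A - g).+1 :=
  [tuple inord (a i - t i) | i < m.+1].
pose psi (u : m.+1.-tuple 'I_(A - g).+1) : {ffun 'I_m.+1 -> 'I_g.+1} :=
  [ffun i => inord (a i - tnth u i)].
have phiE t i : t \in bounded_compositions -> (tnth (phi t) i : nat) = a i - t i.
  by move=> tS; rewrite tnth_mktuple inordK // ltnS complement_le.
have psiE (u : m.+1.-tuple 'I_(A - g).+1) i :
    \sum_(x <- u) (x : nat) = A - g ->
    (psi u i : nat) = a i - tnth u i.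
  move=> /complement_tuple_sum; rewrite (bigD1 i) //= => usum.
  by rewrite ffunE inordK // ltnS -[X in _ <= X]usum leq_addr.
apply: (@card_in_bij _ _ _ _ phi psi) => [t tS | u | t tS | u].
- rewrite inE big_tuple; apply/eqP; apply: etrans (complement_sum tS).
  by apply: eq_bigr => i _; rewrite phiE.
- rewrite !inE => /eqP usum; apply/andP; split.
    apply/eqP; apply: etrans (complement_tuple_sum usum).
    by apply: eq_bigr => i _; rewrite psiE.
  by apply/forallP => i; rewrite psiE // leq_subr.
- have tle i : t i <= a i by move: tS; rewrite inE => /andP[_ /forallP].
  by apply/ffunP => i; apply: val_inj; rewrite /= ffunE phiE // subKn ?inordK.
- rewrite inE => /eqP usum; apply: eq_from_tnth => i; apply: val_inj => /=.
  rewrite tnth_mktuple psiE // subKn ?composition_le_bound // inordK //.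
Qed.

End BoundedCompositions.

Lemma card_bounded_compositions m g (a : 'I_m.+1 -> nat) :
  (forall i, \sum_(j | j != i) a j <= g) -> g <= \sum_(i < m.+1) a i + m ->
  #|bounded_compositions g a| = 'C(\sum_(i < m.+1) a i + m - g, m).
Proof.
move=> cosum_le g_le; have [g_le_A|A_lt_g] := leqP g (\sum_(i < m.+1) a i).
  rewrite card_bounded_compositions_complement // card_ord_partitions.
  by congr 'C(_, _); lia.
rewrite bin_small; last by lia.
apply/eqP; rewrite cards_eq0; apply/eqP/setP => t; rewrite !inE.
apply/negbTE/negP => /andP[/eqP tg /forallP tle].
have : \sum_(i < m.+1) (t i : nat) <= \sum_(i < m.+1) a i.
  by apply: leq_sum => i _; exact: tle.
by rewrite tg; lia.
Qed.

Section FloorBounds.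

Local Open Scope ring_scope.

Variables (m g : nat) (alpha : 'I_m.+1 -> rat).
Hypothesis alpha_ge0 : forall i, 0 <= alpha i.

Definition floor_part i : nat := `|Num.floor (alpha i * g%:R)|%N.

Lemma floor_partE i : Num.floor (alpha i * g%:R) = (floor_part i)%:Z.
Proof. by rewrite gez0_abs // floor_ge0 mulr_ge0. Qed.

Lemma le_floor_partE (n : nat) i :
  (n%:R <= alpha i * g%:R) = (n <= floor_part i)%N.
Proof. by rewrite -lez_nat -floor_partE floor_ge_int. Qed.

(* Multiplying "sum_(j != i) alpha_j <= 1" by g and rounding down gives (1). *)
Lemma floor_cosum_le :
  (forall i0, \sum_(i | i != i0) alpha i <= 1) ->
  forall i, (\sum_(j | j != i) floor_part j <= g)%N.
Proof.
move=> hsub i; rewrite -(ler_nat rat) natr_sum.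
apply: (le_trans (y := (\sum_(j | j != i) alpha j) * g%:R)).
  by rewrite mulr_suml; apply: ler_sum => j _; rewrite le_floor_partE.
by rewrite -[leRHS]mul1r ler_wpM2r.
Qed.

(* Since alpha_i * g < a_i + 1, "1 < sum_i alpha_i" gives (2). *)
Lemma lt_floor_sum :
  1 < \sum_i alpha i -> (g < \sum_(i < m.+1) floor_part i + m.+1)%N.
Proof.
move=> hsum; rewrite -(ltr_nat rat).
apply: (le_lt_trans (y := (\sum_i alpha i) * g%:R)).
  by rewrite -[leLHS]mul1r ler_wpM2r // ltW.
have -> : (\sum_(i < m.+1) floor_part i + m.+1)%:R =
          \sum_i ((floor_part i)%:R + 1) :> rat.
  by rewrite big_split /= sumr_const card_ord natrD natr_sum.
rewrite mulr_suml.
apply: ltr_sum => [|i _]; first by apply/hasP; exists ord0; rewrite ?mem_index_enum.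
by have := floorD1_gt (alpha i * g%:R); rewrite floor_partE intrD.
Qed.

End FloorBounds.

Theorem mainTheorem1 (k : nat) (alpha : 'I_k -> rat)
  (hk : (2 <= k)%N)
  (hnn : forall i, (0 <= alpha i)%R)
  (hsub : forall i0 : 'I_k, (\sum_(i < k | i != i0) alpha i <= 1)%R)
  (hsum : (1 < \sum_(i < k) alpha i)%R) :
  forall g : nat,
    let N : int := (\sum_(i < k) Num.floor (alpha i * g%:R) - g%:Z + (k - 1)%:Z)%R in
    (0 <= N)%R /\ f_count alpha g = 'C(`|N|%N, k - 1).
Proof.
case: k alpha hk hnn hsub hsum => [|m] // alpha _ hnn hsub hsum g N.
have cosum_le := floor_cosum_le g hnn hsub.
have g_lt := lt_floor_sum g hnn hsum.
set a := floor_part g alpha in cosum_le g_lt *.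
pose A := \sum_(i < m.+1) a i.
have sum_floor : (\sum_(i < m.+1) Num.floor (alpha i * g%:R) = A%:Z)%R.
  rewrite (big_morph _ PoszD (erefl 0%Z)).
  by apply: eq_bigr => i _; rewrite floor_partE.
(* Condition (2) makes the truncated difference below exact. *)
have eN : N = (A + m - g)%N by rewrite /N sum_floor subn1 /=; lia.
split; first by rewrite eN.
rewrite eN absz_nat subn1 -card_bounded_compositions //; last by lia.
(* On tuples summing to g, being communal means being bounded by a. *)
apply: eq_card => t; rewrite !inE; case: eqP => //= tg.
by apply: eq_forallb => i; rewrite tg le_floor_partE.
Qed.
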